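(* Let $m$ be a positive integer and $0<\theta<1$. For each positive integer $n$ let $\phi_n$ be the unique root in $(0,1)$ of $\phi^{n+1}+\phi^n-1$, and set $\phi_0=0$. If $\theta\in[\phi_{m-1}^2,\phi_m^2]$ (with $\theta>0$), then $L_m(\theta)\le L_{m'}(\theta)$ for every positive integer $m'$, i.e. $m$ is an optimal coding parameter at precision $\rho/\tau\to0$.
   Context: $\lg$ denotes $\log_2$. For a positive integer $m$ and $0<\theta<1$, the asymptotic (precision $\rho/\tau\to0$) average code length of the modified Rice-Golomb code for Laplace-distributed residuals is $$L_m(\theta)=\begin{cases}1+\lg m+\dfrac{\theta^{m/2}}{1-\theta^{m/2}}, & m=2^\beta \text{ for some integer } \beta\ge0,\\[2mm] 1+\lfloor\lg m\rfloor+\dfrac{\theta^{(2^{\lceil\lg m\rceil}-m)/2}}{1-\theta^{m/2}}, & \text{otherwise.}\end{cases}$$ *)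

From Stdlib Require Import Reals Arith PeanoNat.
Open Scope R_scope.

Definition lg (x : R) : R := ln x / ln 2.

(* Asymptotic average code length L_m(theta) of the modified Rice-Golomb code.
   floor(lg m) = Nat.log2 m, ceil(lg m) = Nat.log2_up m (for m >= 1);
   theta^x is the real power Rpower theta x (theta > 0). *)
(* The test 2^(floor lg m) = m decides whether m = 2^beta for some beta >= 0. *)
Definition L (m : nat) (theta : R) : R :=
  if Nat.eqb (2 ^ Nat.log2 m) m then
    1 + lg (INR m) + Rpower theta (INR m / 2) / (1 - Rpower theta (INR m / 2))
  else
    1 + INR (Nat.log2 m)
      + Rpower theta (INR (2 ^ Nat.log2_up m - m) / 2)
        / (1 - Rpower theta (INR m / 2)).

Definition is_phi (n : nat) (a : R) : Prop :=
  match n with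
  | O => a = 0
  | S _ => 0 < a < 1 /\ a ^ (S n) + a ^ n - 1 = 0
  end.

(* Put s = sqrt theta.  In both cases of its definition,
   L m = 1 + floor(lg m) + s^(2^(floor(lg m)+1) - m) / (1 - s^m), and from this
   L (m+1) - L m is a positive multiple of 1 - s^m - s^(m+1).  The sum
   s^n + s^(n+1) decreases in n and increases in s, and phi_n is exactly where it
   equals 1; so phi_(m-1) <= s <= phi_m makes n |-> L n nonincreasing on [1, m]
   and nondecreasing on [m, oo). *)
From Stdlib Require Import Reals Lra Lia Arith.
Open Scope R_scope.

Lemma pow_le_pow_le1 (x : R) (a b : nat) :
  0 <= x <= 1 -> (a <= b)%nat -> x ^ b <= x ^ a.
Proof.
  intros Hx Hab. replace b with (a + (b - a))%nat by lia.
  rewrite pow_add.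
  assert (Ha : 0 <= x ^ a) by (apply pow_le; lra).
  assert (Hba : x ^ (b - a) <= 1).
  { rewrite <- (pow1 (b - a)). apply pow_incr; lra. }
  nra.
Qed.

Lemma pow_add_pow_succ_antitone (x : R) (a b : nat) :
  0 <= x <= 1 -> (a <= b)%nat -> x ^ b + x ^ S b <= x ^ a + x ^ S a.
Proof.
  intros Hx Hab.
  pose proof (pow_le_pow_le1 x a b Hx Hab).
  pose proof (pow_le_pow_le1 x (S a) (S b) Hx (le_n_S _ _ Hab)).
  lra.
Qed.

Lemma pow_add_pow_succ_monotone (x y : R) (n : nat) :
  0 <= x <= y -> x ^ n + x ^ S n <= y ^ n + y ^ S n.
Proof.
  intros Hxy.
  pose proof (pow_incr x y n Hxy). pose proof (pow_incr x y (S n) Hxy).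
  lra.
Qed.

Lemma le_chain_up (f : nat -> R) (m : nat) :
  (forall n, (m <= n)%nat -> f n <= f (S n)) ->
  forall m', (m <= m')%nat -> f m <= f m'.
Proof.
  intros Hf m' Hm'. induction Hm' as [|m' Hm' IH]; [lra|].
  eapply Rle_trans; [exact IH | exact (Hf m' Hm')].
Qed.

Lemma le_chain_down (f : nat -> R) (m m' : nat) :
  (forall n, (m' <= n < m)%nat -> f (S n) <= f n) ->
  (m' <= m)%nat -> f m <= f m'.
Proof.
  intros Hf Hm'. induction Hm' as [|m Hm IH]; [lra|].
  eapply Rle_trans; [apply Hf; lia|].
  apply IH. intros n Hn. apply Hf. lia.
Qed.

Lemma Rpower_half_INR (theta : R) (n : nat) :
  0 < theta -> Rpower theta (INR n / 2) = sqrt theta ^ n.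
Proof.
  intros Ht. unfold Rdiv.
  rewrite Rmult_comm, <- Rpower_mult, Rpower_sqrt by exact Ht.
  apply Rpower_pow, sqrt_lt_R0, Ht.
Qed.

Lemma log2_up_not_pow2 (m : nat) :
  (0 < m)%nat -> (2 ^ Nat.log2 m <> m)%nat -> Nat.log2_up m = S (Nat.log2 m).
Proof.
  intros Hm Hnot.
  pose proof (Nat.le_log2_log2_up m). pose proof (Nat.le_log2_up_succ_log2 m).
  enough (Nat.log2 m <> Nat.log2_up m) by lia.
  intros Heq. apply (Nat.log2_log2_up_exact m Hm) in Heq as [b ->].
  apply Hnot. rewrite Nat.log2_pow2; lia.
Qed.

Lemma L_sqrt (m : nat) (theta : R) : (0 < m)%nat -> 0 < theta ->
  L m theta = 1 + INR (Nat.log2 m)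
    + sqrt theta ^ (2 ^ S (Nat.log2 m) - m) / (1 - sqrt theta ^ m).
Proof.
  intros Hm Ht. unfold L. rewrite !Rpower_half_INR by exact Ht.
  destruct (Nat.eqb_spec (2 ^ Nat.log2 m) m) as [Hpow|Hpow].
  - replace (2 ^ S (Nat.log2 m) - m)%nat with m
      by (rewrite Nat.pow_succ_r'; lia).
    do 2 f_equal. unfold lg. rewrite <- Hpow at 1.
    rewrite pow_INR, ln_pow by (simpl; lra).
    assert (Hln2 : 0 < ln 2) by (rewrite <- ln_1; apply ln_increasing; lra).
    replace (INR 2) with 2 by (simpl; ring).
    field. lra.
  - rewrite log2_up_not_pow2 by assumption. reflexivity.
Qed.

Lemma L_succ_sub (m : nat) (theta : R) : (0 < m)%nat -> 0 < theta < 1 ->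
  exists p : R, 0 < p /\
    L (S m) theta - L m theta = p * (1 - sqrt theta ^ m - sqrt theta ^ S m).
Proof.
  intros Hm Ht. set (s := sqrt theta).
  assert (Hs0 : 0 < s) by (apply sqrt_lt_R0; lra).
  assert (Hs1 : s < 1) by (unfold s; rewrite <- sqrt_1; apply sqrt_lt_1; lra).
  pose proof (pow_lt_1_compat s m ltac:(lra) Hm) as Hsm.
  pose proof (pow_lt_1_compat s (S m) ltac:(lra) ltac:(lia)) as HsSm.
  assert (Hpos : forall c, 0 < s ^ c * (1 - s) / ((1 - s ^ m) * (1 - s ^ S m))).
  { intros c. apply Rdiv_lt_0_compat.
    - apply Rmult_lt_0_compat; [apply pow_lt|]; lra.
    - apply Rmult_lt_0_compat; lra. }
  rewrite !L_sqrt by (lia || lra). fold s.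
  pose proof (Nat.log2_spec m Hm) as [Hlo Hhi].
  set (k := Nat.log2 m) in *.
  destruct (Nat.eq_dec (S m) (2 ^ S k)) as [Hpow|Hpow].
  - (* m + 1 = 2^(k+1): the exponent 2^(k+1) - m is 1 and the length gains a bit. *)
    exists (s ^ 0 * (1 - s) / ((1 - s ^ m) * (1 - s ^ S m))). split; [apply Hpos|].
    rewrite Hpow, Nat.log2_pow2 by lia.
    replace (2 ^ S k - m)%nat with 1%nat by lia.
    replace (2 ^ S (S k) - 2 ^ S k)%nat with (S m)
      by (rewrite (Nat.pow_succ_r' 2 (S k)); lia).
    rewrite <- Hpow, S_INR. simpl pow in HsSm |- *.
    field. split; lra.
  - replace (Nat.log2 (S m)) with k by (symmetry; apply Nat.log2_unique; lia).
    exists (s ^ (2 ^ S k - S m) * (1 - s) / ((1 - s ^ m) * (1 - s ^ S m))).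
    split; [apply Hpos|].
    replace (2 ^ S k - m)%nat with (S (2 ^ S k - S m)) by lia.
    simpl pow in HsSm |- *.
    field. split; lra.
Qed.

Lemma L_le_succ (m : nat) (theta : R) : (0 < m)%nat -> 0 < theta < 1 ->
  sqrt theta ^ m + sqrt theta ^ S m <= 1 -> L m theta <= L (S m) theta.
Proof.
  intros Hm Ht Hsum. destruct (L_succ_sub m theta Hm Ht) as [p [Hp Hdiff]].
  nra.
Qed.

Lemma L_succ_le (m : nat) (theta : R) : (0 < m)%nat -> 0 < theta < 1 ->
  1 <= sqrt theta ^ m + sqrt theta ^ S m -> L (S m) theta <= L m theta.
Proof.
  intros Hm Ht Hsum. destruct (L_succ_sub m theta Hm Ht) as [p [Hp Hdiff]].
  nra.
Qed.

Theorem theorem3 (m : nat) (theta : R) :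
  (0 < m)%nat -> 0 < theta < 1 ->
  forall phi_prev phi_m : R,
    is_phi (m - 1) phi_prev -> is_phi m phi_m ->
    phi_prev ^ 2 <= theta <= phi_m ^ 2 ->
    forall m' : nat, (0 < m')%nat -> L m theta <= L m' theta.
Proof.
  intros Hm Ht pp pm Hpp Hpm [Hlo Hhi] m' Hm'.
  set (s := sqrt theta).
  assert (Hs : 0 <= s <= 1)
    by (split; [apply sqrt_pos | unfold s; rewrite <- sqrt_1; apply sqrt_le_1_alt; lra]).
  destruct (le_lt_dec m m') as [Hle|Hlt].
  - destruct m as [|n]; [lia|]. destruct Hpm as [Hpm01 Hroot].
    assert (Hspm : s <= pm) by (rewrite <- (sqrt_pow2 pm) by lra; apply sqrt_le_1_alt, Hhi).
    apply le_chain_up with (f := fun k => L k theta); [|exact Hle].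
    intros k Hk. apply L_le_succ; [lia | exact Ht |]. fold s.
    pose proof (pow_add_pow_succ_antitone s (S n) k Hs Hk).
    pose proof (pow_add_pow_succ_monotone s pm (S n) ltac:(lra)).
    lra.
  - destruct m as [|[|n]]; [lia | lia |].
    replace (S (S n) - 1)%nat with (S n) in Hpp by lia.
    destruct Hpp as [Hpp01 Hroot].
    assert (Hpps : pp <= s) by (rewrite <- (sqrt_pow2 pp) by lra; apply sqrt_le_1_alt, Hlo).
    apply le_chain_down with (f := fun k => L k theta); [|lia].
    intros k Hk. apply L_succ_le; [lia | exact Ht |]. fold s.
    pose proof (pow_add_pow_succ_antitone s k (S n) Hs ltac:(lia)).
    pose proof (pow_add_pow_succ_monotone pp s (S n) ltac:(lra)).
    lra.
Qed.
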